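(* Let $\mathcal{D}\subset\mathbb{R}^d$ be bounded with non-empty interior $\mathcal{D}^\circ$. For every $M\in G$ and every $t\in\mathcal{D}^\circ$ the minimum defining $F(M,t)$ exists (so $F(M,t)\in\mathbb{R}_{>0}$), and $F(\gamma M,t)=F(M,t)$ for all $\gamma\in\Gamma$. Hence $F$ is well-defined as a function $\Gamma\backslash G\times\mathcal{D}^\circ\to\mathbb{R}_{>0}$.
   Context: Let $G=\operatorname{SL}(d+1,\mathbb{R})$ and $\Gamma=\operatorname{SL}(d+1,\mathbb{Z})$; vectors are row vectors, and $\mathbb{Z}^{d+1}M$ is the lattice spanned by the rows of $M$. For $M\in G$ and $t\in\mathcal{D}$ define $F(M,t)=\min\{y>0\mid (x,y)\in\mathbb{Z}^{d+1}M,\ x\in\mathbb{R}^d,\ y\in\mathbb{R},\ x+t\in\mathcal{D}\}$ whenever the minimum exists, and $F(M,t)=\infty$ otherwise. *)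

From HB Require Import structures.
From mathcomp Require Import all_boot all_order all_algebra.
From mathcomp Require Import all_classical all_reals all_analysis.
Set Implicit Arguments. Unset Strict Implicit. Unset Printing Implicit Defensive.
Import Order.TTheory GRing.Theory Num.Theory.
Import numFieldNormedType.Exports.
Local Open Scope classical_set_scope.
Local Open Scope ring_scope.

Definition intmx (R : realType) m n (A : 'M[int]_(m, n)) : 'M[R]_(m, n) :=
  map_mx (fun z : int => z%:~R) A.

(* The set of heights y > 0 of lattice points (x, y) of Z^{d+1} M (row vectors,
   lattice spanned by rows of M) with x + t in D. *)
Definition Fset (R : realType) (d : nat) (D : set 'rV[R]_d)
    (M : 'M[R]_(d + 1)) (t : 'rV[R]_d) : set R :=
  [set y | 0 < y /\ exists k : 'rV[int]_(d + 1),
      let v := @intmx R _ _ k *m M in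
      D (lsubmx v + t) /\ rsubmx v ord0 ord0 = y].

Definition is_min_of (R : realType) (S : set R) (y : R) : Prop :=
  S y /\ forall z, S z -> y <= z.

Definition F (R : realType) (d : nat) (D : set 'rV[R]_d)
    (M : 'M[R]_(d + 1)) (t : 'rV[R]_d) : \bar R :=
  match pselect (exists y, is_min_of (Fset D M t) y) with
  | left h => (projT1 (cid h))%:E
  | right _ => +oo%E
  end.

From HB Require Import structures.
From mathcomp Require Import all_boot all_order all_algebra.
From mathcomp Require Import all_classical all_reals all_analysis.
From mathcomp Require Import lra zify.
Import Order.TTheory GRing.Theory Num.Theory.
Import numFieldNormedType.Exports.
Set Implicit Arguments. Unset Strict Implicit.
Local Open Scope classical_set_scope.
Local Open Scope ring_scope.

(* Invariance: k |-> k g permutes the integer row vectors, so g M and M span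
   the same lattice.  Existence: by Dirichlet's pigeonhole argument some
   nonzero lattice vector has its first d coordinates as small as we like;
   discreteness of the lattice then forces its height to be nonzero, and up to
   sign it is an admissible height.  As D is bounded, the lattice points of
   admissible height below a given one have bounded coordinates, hence are
   finitely many, and the least of them is the minimum. *)

Section matrix_entries.
Context {R : realType}.

Lemma ler_mx_norm_entry m n (z : 'M[R]_(m, n)) i j : `|z i j| <= `|z|.
Proof.
have /mapP[k _ ->] : `|z i j| \in [seq `|z x.1 x.2| | x : 'I_m * 'I_n].
  by apply/mapP; exists (i, j) => //=; rewrite mem_enum.
by rewrite [`|z|]mx_normrE; apply/bigmax_geP; right; exists k.
Qed.

Lemma bounded_set_entries m n (D : set 'M[R]_(m, n)) : bounded_set D ->
  exists B, forall z, D z -> forall i j, `|z i j| <= B.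
Proof.
case=> B [Breal hB]; exists (`|B| + 1) => z Dz i j.
apply: le_trans (ler_mx_norm_entry z i j) _; apply: hB Dz.
by apply: le_lt_trans (real_ler_norm Breal) _; rewrite ltrDl.
Qed.

Lemma interior_entries m n (D : set 'M[R]_(m, n)) t : D° t ->
  exists2 e, 0 < e & forall x : 'M[R]_(m, n),
    (forall i j, `|x i j| < e) -> D (x + t).
Proof.
case/nbhs_ballP => e /= e0 De; exists e => // x hx; apply: De.
by split=> // i j; rewrite /ball /= mxE opprD addrCA subrr addr0 normrN.
Qed.

Lemma norm_hsubmx_le m n1 n2 (v : 'M[R]_(m, n1 + n2)) c :
  (forall i j, `|lsubmx v i j| <= c) -> (forall i j, `|rsubmx v i j| <= c) ->
  forall i j, `|v i j| <= c.
Proof.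
move=> hl hr i j; rewrite -(hsubmxK v) mxE.
by case: splitP => j' _; [exact: hl | exact: hr].
Qed.

Lemma norm_row_mulmx_le n p (u : 'rV[R]_n) (A : 'M[R]_(n, p)) a j :
  (forall i, `|u 0 i| <= a) -> `|(u *m A) 0 j| <= a * \sum_i `|A i j|.
Proof.
move=> hu; rewrite mxE mulr_sumr; apply: le_trans (ler_norm_sum _ _ _) _.
by apply: ler_sum => i _; rewrite normrM ler_wpM2r.
Qed.

End matrix_entries.

Lemma intmxM (R : realType) m n p (A : 'M[int]_(m, n)) (B : 'M[int]_(n, p)) :
  intmx R (A *m B) = intmx R A *m intmx R B.
Proof. exact: map_mxM. Qed.

Section lattice.
Context {R : realType} {n : nat}.
Variable M : 'M[R]_n.
Hypothesis uM : M \in unitmx.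

Let S := \sum_i \sum_j `|invmx M j i|.

Let S_ge0 : 0 <= S.
Proof. by apply: sumr_ge0 => i _; apply: sumr_ge0. Qed.

Lemma lattice_coord_le (k : 'rV[int]_n) B :
  (forall j, `|(intmx R k *m M) 0 j| <= B) ->
  forall i, `|(k 0 i)%:~R : R| <= `|B| * S.
Proof.
move=> hk i.
have -> : (k 0 i)%:~R = (intmx R k *m M *m invmx M) 0 i.
  by rewrite mulmxK // mxE.
have hkB j : `|(intmx R k *m M) 0 j| <= `|B| := le_trans (hk j) (ler_norm B).
apply: le_trans (norm_row_mulmx_le (invmx M) i hkB) _.
rewrite ler_wpM2l // /S [leRHS](bigD1 i) //= lerDl.
by apply: sumr_ge0 => l _; apply: sumr_ge0.
Qed.

Lemma lattice_discrete : exists2 c : R, 0 < c & forall k : 'rV[int]_n,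
  (forall j, `|(intmx R k *m M) 0 j| <= c) -> k = 0.
Proof.
have c0 : 0 < (1 + S)^-1 by rewrite invr_gt0; have := S_ge0; lra.
exists (1 + S)^-1 => // k hk; apply/rowP => i; rewrite mxE.
have := lattice_coord_le hk i; rewrite [`|(1 + S)^-1|]gtr0_norm // -intr_norm.
have lt1 : (1 + S)^-1 * S < 1.
  by rewrite mulrC ltr_pdivrMr; have := S_ge0; lra.
move=> /le_lt_trans /(_ lt1); rewrite ltrz1; lia.
Qed.

Lemma finite_lattice_box B :
  finite_set [set k : 'rV[int]_n | forall j, `|(intmx R k *m M) 0 j| <= B].
Proof.
pose C := Num.bound (`|B| * S).
pose shift (b : {ffun 'I_n -> 'I_C.*2.+1}) : 'rV[int]_n :=
  \row_i ((b i)%:Z - C%:Z).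
apply: sub_finite_set (finite_image shift (@finite_finset _ setT)) => k hk.
have kC i : `|k 0 i| <= C%:Z.
  rewrite -(ler_int R) intr_norm; apply: le_trans (lattice_coord_le hk i) _.
  by rewrite ltW // archi_boundP // mulr_ge0.
exists [ffun i => inord (absz (k 0 i + C%:Z))] => //.
by apply/rowP => i; rewrite !mxE ffunE inordK; have := kC i; lia.
Qed.

End lattice.

Section finite_min.
(* Imported locally: finmap's notation [` _] breaks patterns such as [`|z|]. *)
Import finmap.

Lemma finite_le_has_min (R : realType) (A : set R) y0 :
  A y0 -> finite_set (A `&` [set y | y <= y0]) -> exists y, is_min_of A y.
Proof.
move=> Ay0 /finite_fsetP[B AB].
have inB z : A z -> z <= y0 -> z \in B.
  by move=> Az zy0; have : [set` B] z by rewrite -AB.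
pose b0 : B := FSetSub (inB _ Ay0 (lexx y0)).
have [b _ bmin] := arg_minP (fun b : B => val b) (erefl : xpredT b0).
have : [set` B] (val b) by exact: valP.
rewrite -AB => -[Ab _]; exists (val b); split=> // z Az.
have [zy0 | y0z] := leP z y0; first exact: (bmin (FSetSub (inB _ Az zy0))).
exact: le_trans (bmin b0 isT) (ltW y0z).
Qed.

End finite_min.

Section dirichlet.
Context {R : realType}.

Definition cell (m : nat) (z : R) : 'I_m.*2.+1 := inord (Num.truncn (z + m%:R)).

Lemma cell_dist_lt1 (m : nat) (z1 z2 : R) : `|z1| <= m%:R -> `|z2| <= m%:R ->
  cell m z1 = cell m z2 -> `|z1 - z2| < 1.
Proof.
have shift_ge0 (z : R) : `|z| <= m%:R -> 0 <= z + m%:R.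
  by rewrite ler_norml => /andP[? _]; lra.
have truncn_lt (z : R) : `|z| <= m%:R -> (Num.truncn (z + m%:R) < m.*2.+1)%N.
  move=> zm; rewrite truncn_lt_nat ?shift_ge0 // -natr1 -addnn natrD.
  by move: zm; rewrite ler_norml => /andP[_ ?]; lra.
move=> z1m z2m /(congr1 val); rewrite /= !inordK ?truncn_lt // => e.
have /andP[l1 u1] := truncn_itv (shift_ge0 _ z1m).
have /andP[l2 u2] := truncn_itv (shift_ge0 _ z2m).
move: l1 u1; rewrite e -natr1 in u2 * => l1 u1.
by rewrite ltr_norml; apply/andP; split; lra.
Qed.

Lemma card_lt_not_injective (T U : finType) (f : T -> U) : (#|U| < #|T|)%N ->
  exists b1 b2, b1 != b2 /\ f b1 = f b2.
Proof.
move=> UT; have /injectivePn[b1 [b2 ne e]] : ~~ injectiveb f.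
  by apply: contraTN UT => /injectiveP/leq_card; rewrite leqNgt.
by exists b1, b2.
Qed.

Lemma dirichlet_count (K N p n : nat) :
  (0 < K)%N -> N = (K.*2 ^ p)%N -> (p < n)%N ->
  ((N * K).*2.+1 ^ p < N.+1 ^ n)%N.
Proof.
move=> K0 NE pn; have base : ((N * K).*2.+1 <= K.*2 * N.+1)%N by nia.
apply: (@leq_ltn_trans ((K.*2 * N.+1) ^ p)).
  by elim: (p) => // q IH; rewrite !expnS leq_mul.
rewrite expnMn -NE; apply: (@leq_trans (N.+1 ^ p.+1)); last exact: leq_pexp2l.
by rewrite expnS ltn_pmul2r // expn_gt0.
Qed.

(* Of the (N+1)^n vectors with entries in [0, N], two have all p coordinates of
   their image in the same unit cell of [-NK, NK]; k is their difference. *)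
Lemma dirichlet_box1 n p (A : 'M[R]_(n, p)) : (p < n)%N ->
  exists2 k : 'rV[int]_n, k != 0 & forall j, `|(intmx R k *m A) 0 j| < 1.
Proof.
move=> pn; pose S := \sum_i \sum_j `|A i j|.
have S_ge0 : 0 <= S by apply: sumr_ge0 => i _; apply: sumr_ge0.
pose K := Num.bound S; have SK : S < K%:R by exact: archi_boundP.
have K0 : (0 < K)%N by rewrite -(ltr0n R); apply: le_lt_trans SK.
pose N := (K.*2 ^ p)%N.
pose vec (b : {ffun 'I_n -> 'I_N.+1}) : 'rV[int]_n := \row_i (b i : nat)%:Z.
pose x b j := (intmx R (vec b) *m A) 0 j.
have x_bound b j : `|x b j| <= (N * K)%:R.
  have vb i : `|intmx R (vec b) 0 i| <= N%:R.
    by rewrite !mxE pmulrn normr_nat ler_nat -ltnS.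
  apply: le_trans (norm_row_mulmx_le A j vb) _.
  rewrite natrM ler_wpM2l // ltW //.
  apply: le_lt_trans SK; apply: ler_sum => i _.
  by rewrite [leRHS](bigD1 j) //= lerDl sumr_ge0.
pose code b : {ffun 'I_p -> 'I_(N * K).*2.+1} :=
  [ffun j => cell (N * K) (x b j)].
have [|b1 [b2 [ne code_eq]]] := card_lt_not_injective code.
  by rewrite !card_ffun !card_ord; exact: dirichlet_count.
exists (vec b1 - vec b2).
  rewrite subr_eq0; apply: contra ne => /eqP e.
  apply/eqP/ffunP => i; apply/val_inj.
  by have /rowP/(_ i) := e; rewrite !mxE => -[].
move=> j; have -> : (intmx R (vec b1 - vec b2) *m A) 0 j = x b1 j - x b2 j.
  by rewrite /intmx map_mxB mulmxBl [LHS]mxE [X in _ + X]mxE.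
apply: cell_dist_lt1 (x_bound b1 j) (x_bound b2 j) _.
by have /ffunP/(_ j) := code_eq; rewrite !ffunE.
Qed.

Lemma dirichlet_box n p (A : 'M[R]_(n, p)) e : (p < n)%N -> 0 < e ->
  exists2 k : 'rV[int]_n, k != 0 & forall j, `|(intmx R k *m A) 0 j| < e.
Proof.
move=> pn e0; have [k k0 hk] := dirichlet_box1 (e^-1 *: A) pn.
exists k => // j; have := hk j.
rewrite -scalemxAr mxE normrM gtr0_norm ?invr_gt0 //.
by rewrite mulrC ltr_pdivrMr // mul1r.
Qed.

End dirichlet.

Section heights.
Context {R : realType} {d : nat} (D : set 'rV[R]_d).
Implicit Types (M : 'M[R]_(d + 1)) (t : 'rV[R]_d).

Lemma Fset_intmx_mul M t (g : 'M[int]_(d + 1)) : g \in unitmx ->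
  Fset D (intmx R g *m M) t = Fset D M t.
Proof.
move=> ug; apply/seteqP; split=> y [y0 [k [Dk ky]]]; split=> //.
  by exists (k *m g); rewrite intmxM -mulmxA.
by exists (k *m invmx g); rewrite mulmxA -intmxM mulmxKV.
Qed.

Lemma Fset_nonempty M t : M \in unitmx -> D° t -> exists y, Fset D M t y.
Proof.
move=> uM /interior_entries[e e0 De].
have [c c0 discr] := lattice_discrete uM.
have ec0 : 0 < Num.min e c by rewrite lt_min e0 c0.
have [|k k0 hk] := dirichlet_box (lsubmx M) _ ec0; first by rewrite addn1.
pose v (k : 'rV[int]_(d + 1)) := intmx R k *m M.
have small j : `|lsubmx (v k) 0 j| < e /\ `|lsubmx (v k) 0 j| < c.
  by apply/andP; rewrite -lt_min /v -mulmx_lsub; exact: hk.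
have Fset_v k' : (forall j, `|lsubmx (v k') 0 j| < e) ->
    0 < rsubmx (v k') 0 0 -> Fset D M t (rsubmx (v k') 0 0).
  move=> xk' yk'; split=> //; exists k'; split=> //.
  by apply: De => i j; rewrite ord1; exact: xk'.
have [y_neg|y_pos|y0] := ltgtP (rsubmx (v k) 0 0) 0.
- have vN : v (- k) = - v k by rewrite /v /intmx map_mxN mulNmx.
  exists (rsubmx (v (- k)) 0 0); apply: Fset_v; rewrite vN.
    by move=> j; rewrite linearN /= mxE normrN; case: (small j).
  by rewrite linearN /= mxE oppr_gt0.
- by exists (rsubmx (v k) 0 0); apply: Fset_v => // j; case: (small j).
- exfalso; move/negP: k0; apply; apply/eqP/discr; apply: norm_hsubmx_le => i j.
    by rewrite ord1; case: (small j) => _ /ltW.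
  by rewrite !ord1 y0 normr0 ltW.
Qed.

Lemma finite_Fset_le M t y1 : bounded_set D -> M \in unitmx ->
  finite_set (Fset D M t `&` [set y | y <= y1]).
Proof.
move=> /bounded_set_entries[B DB] uM.
pose height (k : 'rV[int]_(d + 1)) := rsubmx (intmx R k *m M) 0 0.
pose C := `|B| + `|t| + `|y1|.
apply: sub_finite_set (finite_image height (finite_lattice_box uM C)).
move=> y [[y_gt0 [k [Dk ky]]] y_le]; exists k => //.
have := And4 (ler_norm B) (normr_ge0 B) (normr_ge0 t) (normr_ge0 y1).
move=> [B_le B_ge0 t_ge0 y1_ge0].
apply: norm_hsubmx_le => i j; rewrite ord1.
  set x := lsubmx _.
  have -> : x 0 j = (x + t) 0 j - t 0 j by rewrite [(x + t) 0 j]mxE addrK.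
  apply: le_trans (ler_normB _ _) _.
  by have := DB _ Dk 0 j; have := ler_mx_norm_entry t 0 j; rewrite /C; lra.
by rewrite ord1 ky gtr0_norm // /C; have := le_trans y_le (ler_norm y1); lra.
Qed.

Lemma F_min_of M t y : is_min_of (Fset D M t) y -> F D M t = y%:E.
Proof.
move=> ymin; rewrite /F; case: pselect => [h|]; last by case; exists y.
case: cid => z [Fz zmin] /=; congr (_%:E).
by apply/le_anti/andP; split; [exact: zmin ymin.1 | exact: ymin.2].
Qed.

End heights.

Theorem proposition2p1 (R : realType) (d : nat) (D : set 'rV[R]_d) :
  bounded_set D -> D° !=set0 ->
  forall M : 'M[R]_(d + 1), \det M = 1 ->
  forall t : 'rV[R]_d, D° t ->
    (exists y : R, is_min_of (Fset D M t) y /\ 0 < y /\ F D M t = y%:E) /\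
    (forall g : 'M[int]_(d + 1), \det g = 1 ->
       F D (@intmx R _ _ g *m M) t = F D M t).
Proof.
move=> bD _ M detM t Dt.
have uM : M \in unitmx by rewrite unitmxE detM unitr1.
split=> [|g detg]; last by rewrite /F Fset_intmx_mul // unitmxE detg unitr1.
have [y1 Fy1] := Fset_nonempty uM Dt.
have [y ymin] := finite_le_has_min Fy1 (finite_Fset_le t y1 bD uM).
by exists y; split=> //; split; [exact: ymin.1.1 | exact: F_min_of].
Qed.
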